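(* (1) For every term $t$, $nv(t)=un(t)\cup an(t)$. (2) For every program $p$, $nv(p)=un(p)\cup an(p)$. (3) For every open term evaluation context $\mathcal{H}$, $nv(\mathcal{H})=un(\mathcal{H})\cup an(\mathcal{H})$.
   Context: Terms: $t,u ::= x \mid \lambda x.t \mid t\,u$; values $v ::= \lambda x.t$; environments $E ::= \epsilon\mid E[x\leftarrow t]$ (explicit substitutions); programs $p ::= (t,E)$, with $x$ bound in $E$ and $u$ in $(u,E[x\leftarrow t])$, up to $\alpha$-renaming. Inert terms: $i ::= x\mid i\,f$ where $f ::= v\mid i$. Open term evaluation contexts: $\mathcal{H} ::= \langle\cdot\rangle\mid \mathcal{H}\,t\mid i\,\mathcal{H}$. Needed variables: $nv(x)=\{x\}$, $nv(\lambda x.t)=\emptyset$, $nv(t\,u)=nv(t)\cup nv(u)$; $nv((t,\epsilon))=nv(t)$, $nv((t,E[x\leftarrow u]))=nv((t,E))$ if $x\notin nv((t,E))$, else $(nv((t,E))\setminus\{x\})\cup nv(u)$; $nv(\langle\cdot\rangle)=\emptyset$, $nv(\mathcal{H}\,t)=nv(\mathcal{H})$, $nv(i\,\mathcal{H})=nv(i)\cup nv(\mathcal{H})$. Applied variables: $an(\lambda x.t)=\emptyset$, $an(x)=\emptyset$, $an(t\,u)=\{x\}\cup an(u)$ if $t=x$ is a variable, and $an(t)\cup an(u)$ if $t$ is not a variable; $an((t,\epsilon))=an(t)$; $an((t,E[x\leftarrow u]))$ is: $an((t,E))$ if $x\notin nv((t,E))$; $(an((t,E))\setminus\{x\})\cup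 an(u)$ if $x\in nv((t,E))$ and ($x\notin an((t,E))$ or $u$ is not a variable); $(an((t,E))\setminus\{x\})\cup\{y\}$ if $x\in nv((t,E))$, $x\in an((t,E))$ and $u=y$ is a variable. For term contexts: $an(\langle\cdot\rangle)=\emptyset$, $an(\mathcal{H}\,t)=an(\mathcal{H})$, $an(i\,\mathcal{H})=an(i)\cup an(\mathcal{H})$. Unapplied variables: $un(\lambda x.t)=\emptyset$, $un(x)=\{x\}$, $un(t\,u)=un(u)$ if $t$ is a variable, and $un(t)\cup un(u)$ otherwise; $un((t,\epsilon))=un(t)$; $un((t,E[x\leftarrow u]))$ is: $un((t,E))$ if $x\notin un((t,E))$ and ($x\notin nv((t,E))$ or $u$ is a variable); $(un((t,E))\setminus\{x\})\cup un(u)$ if $x\in un((t,E))$ or ($x\in nv((t,E))$ and $u$ is not a variable). For term contexts: $un(\langle\cdot\rangle)=\emptyset$, $un(\mathcal{H}\,t)=un(\mathcal{H})$, $un(i\,\mathcal{H})=un(i)\cup un(\mathcal{H})$. *)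

From mathcomp Require Import all_boot.
From mathcomp Require Import finmap.
Set Implicit Arguments. Unset Strict Implicit. Unset Printing Implicit Defensive.
Local Open Scope fset_scope.

Definition var := nat.

Inductive term : Type :=
| Var : var -> term
| Lam : var -> term -> term
| App : term -> term -> term.

(* Environments E ::= eps | E[x <- t]  (the new substitution is appended on the right). *)
Inductive env : Type :=
| Eps : env
| ESub : env -> var -> term -> env.

Definition program : Type := (term * env)%type.

Definition is_var (t : term) : bool := if t is Var _ then true else false.
Definition is_val (t : term) : bool := if t is Lam _ _ then true else false.

Fixpoint inert (t : term) : bool :=
  match t with
  | Var _ => true
  | Lam _ _ => false
  | App i f => inert i && (is_val f || inert f)
  end.

(* Open term evaluation contexts: H ::= <.> | H t | i H  (i inert). *)
Inductive ctx : Type :=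
| Hole : ctx
| CAppL : ctx -> term -> ctx
| CAppR : term -> ctx -> ctx.

Fixpoint wf_ctx (H : ctx) : bool :=
  match H with
  | Hole => true
  | CAppL H' _ => wf_ctx H'
  | CAppR i H' => inert i && wf_ctx H'
  end.

Fixpoint nv (t : term) : {fset var} :=
  match t with
  | Var x => [fset x]
  | Lam _ _ => fset0
  | App t u => nv t `|` nv u
  end.

Fixpoint nv_prog_aux (t : term) (E : env) : {fset var} :=
  match E with
  | Eps => nv t
  | ESub E x u =>
      let S := nv_prog_aux t E in
      if x \notin S then S else (S `\ x) `|` nv u
  end.

Definition nv_prog (p : program) : {fset var} := nv_prog_aux p.1 p.2.

Fixpoint nv_ctx (H : ctx) : {fset var} :=
  match H with
  | Hole => fset0
  | CAppL H _ => nv_ctx H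
  | CAppR i H => nv i `|` nv_ctx H
  end.

Fixpoint an (t : term) : {fset var} :=
  match t with
  | Var _ => fset0
  | Lam _ _ => fset0
  | App t u =>
      match t with
      | Var x => [fset x] `|` an u
      | _ => an t `|` an u
      end
  end.

Fixpoint an_prog_aux (t : term) (E : env) : {fset var} :=
  match E with
  | Eps => an t
  | ESub E x u =>
      let S := an_prog_aux t E in
      if x \notin nv_prog_aux t E then S
      else match u with
           | Var y => if x \in S then (S `\ x) `|` [fset y] else (S `\ x) `|` an u
           | _ => (S `\ x) `|` an u
           end
  end.

Definition an_prog (p : program) : {fset var} := an_prog_aux p.1 p.2.

Fixpoint an_ctx (H : ctx) : {fset var} :=
  match H with
  | Hole => fset0
  | CAppL H _ => an_ctx H
  | CAppR i H => an i `|` an_ctx H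
  end.

Fixpoint un (t : term) : {fset var} :=
  match t with
  | Var x => [fset x]
  | Lam _ _ => fset0
  | App t u => if is_var t then un u else un t `|` un u
  end.

Fixpoint un_prog_aux (t : term) (E : env) : {fset var} :=
  match E with
  | Eps => un t
  | ESub E x u =>
      let S := un_prog_aux t E in
      if (x \in S) || ((x \in nv_prog_aux t E) && ~~ is_var u)
      then (S `\ x) `|` un u
      else S
  end.

Definition un_prog (p : program) : {fset var} := un_prog_aux p.1 p.2.

Fixpoint un_ctx (H : ctx) : {fset var} :=
  match H with
  | Hole => fset0
  | CAppL H _ => un_ctx H
  | CAppR i H => un i `|` un_ctx H
  end.

From mathcomp Require Import all_boot.
From mathcomp Require Import finmap.
Local Open Scope fset_scope.

(* For programs the identity
   is an invariant of the environment: a substitution [x <- u] with [x] needed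
   removes [x] from both sets and adds [nv u = un u `|` an u], except when [u]
   is a variable [y], where [x] is renamed to [y] in whichever of the two sets
   contains it, and at least one does because [x] is needed. *)

Lemma un_App_nonvar (t u : term) : ~~ is_var t -> un (App t u) = un t `|` un u.
Proof. by case: t. Qed.

Lemma an_App_nonvar (t u : term) : ~~ is_var t -> an (App t u) = an t `|` an u.
Proof. by case: t. Qed.

Lemma nv_unU_an (t : term) : nv t = un t `|` an t.
Proof.
elim: t => [x|x t _|t IHt u IHu]; try by rewrite /= fsetU0.
have [|tNV] := boolP (is_var t).
  by case: t {IHt} => // y _ /=; rewrite IHu fsetUCA.
by rewrite un_App_nonvar // an_App_nonvar //= IHt IHu fsetUACA.
Qed.

Lemma nv_ctx_unU_an (H : ctx) : nv_ctx H = un_ctx H `|` an_ctx H.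
Proof.
elim: H => [|H IH v|i H IH] /=; rewrite ?fsetU0 //.
by rewrite IH nv_unU_an fsetUACA.
Qed.

Lemma fsetDUACA (K : choiceType) (A B A' B' C : {fset K}) :
  (A `\` C `|` B) `|` (A' `\` C `|` B') = (A `|` A') `\` C `|` (B `|` B').
Proof. by rewrite fsetDUl fsetUACA. Qed.

Lemma nv_prog_aux_unU_an (t : term) (E : env) :
  nv_prog_aux t E = un_prog_aux t E `|` an_prog_aux t E.
Proof.
elim: E => [|E IH x u] /=; first exact: nv_unU_an.
set N := nv_prog_aux t E in IH *.
set U := un_prog_aux t E in IH *; set A := an_prog_aux t E in IH *.
have [xN|xNN] := boolP (x \in N); last first.
  have xNU : x \notin U by apply: contra xNN; rewrite IH inE => ->.
  by rewrite (negbTE xNU) /= IH.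
rewrite /= IH.
case: u => [y|y v|v w]; cbn [is_var negb andb orb];
  rewrite ?orbF ?orbT ?fsetDUACA -?nv_unU_an //.
have : x \in U `|` A by rewrite -IH.
rewrite inE; case: ifP; case: ifP => //= xA xU _; apply/fsetP => z; rewrite !inE.
all: case: (eqVneq z x) => [->|_] /=; rewrite ?xA ?xU ?orbF ?orbb //.
all: by case: (z \in U); case: (z \in A); case: (z == y).
Qed.

Theorem mainTheorem4 :
  (forall t : term, nv t = un t `|` an t) /\
  (forall p : program, nv_prog p = un_prog p `|` an_prog p) /\
  (forall H : ctx, wf_ctx H -> nv_ctx H = un_ctx H `|` an_ctx H).
Proof.
split; first exact: nv_unU_an.
split; first by case=> t E; exact: nv_prog_aux_unU_an.
by move=> H _; exact: nv_ctx_unU_an.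
Qed.
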